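(* Under the setting below, suppose that (P) is feasible for some $\gamma>1$ and that $m>0$ and $G^a>0$ entrywise for all $a$. Let $\bar\gamma_N$ denote the supremum of the values $\gamma>1$ for which (P) is feasible. Then for any $\gamma\in[1,\bar\gamma_N)$ there exist a solution $\theta$ of (P) and a solution $V$ of (D), and at these solutions: (1) for each $j=1,\dots,N-1$ there exists at least one $a_j\in\{1,\dots,M\}$ such that $[V]_j=\gamma[P^1_{T_{a_j}}V]_j+[G^{a_j}]_j$ and $[\theta^{a_j}]_j>0$; (2) there exists a solution $\tilde\theta$ of (P) such that for each $j=1,\dots,N-1$ there is exactly one $a_j\in\{1,\dots,M\}$ with $[\tilde\theta^{a_j}]_j>0$ and $[\tilde\theta^{a'}]_j=0$ for all $a'\ne a_j$.
   Context: Finite-dimensional setting: $\mathcal{X}_N=\{D_1,\dots,D_N\}$ is a finite partition of a compact state space $X\subset\mathbb{R}^q$ with the attractor set $\mathcal{A}\subseteq D_N$; $\mathcal{U}_M=\{u^1,\dots,u^M\}$ is a finite set of control values; $\{\xi^1,\dots,\xi^L\}$ is a finite set of uncertainty values with probabilities $v^1,\dots,v^L\ge0$, $\sum_\ell v^\ell=1$. For the system $x_{n+1}=T(x_n,u_n,\xi_n)$, let $T_{u^a,\xi^\ell}=T(\cdot,u^a,\xi^\ell):X\to X$ and define the $N\times N$ Markov matrix $P_{T_{a,\ell}}$ by $[P_{T_{a,\ell}}]_{ij}=m_L(T_{u^a,\xi^\ell}^{-1}(D_j)\cap D_i)/m_L(D_i)$, $m_L$ the Lebesgue measure. Set $P_{T_a}=\sum_{\ell=1}^L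 v^\ell P_{T_{a,\ell}}$ and let $P^1_{T_a}\in\mathbb{R}^{(N-1)\times(N-1)}$ be the submatrix of its first $N-1$ rows and columns. Let $G^{a,\ell}\in\mathbb{R}^{N-1}$ be given cost vectors ($[G^{a,\ell}]_j$ is the cost of using $u^a$ on $D_j$ with uncertainty $\xi^\ell$) and $G^a=\sum_\ell v^\ell G^{a,\ell}$. Let $m\in\mathbb{R}^{N-1}$ be a given vector. Prime denotes transpose. Primal LP (P): minimize $\sum_{a=1}^M (G^a)'\theta^a$ over $\theta^1,\dots,\theta^M\in\mathbb{R}^{N-1}$, $\theta^a\ge0$, subject to $\gamma\sum_{a=1}^M(P^1_{T_a})'\theta^a-\sum_{a=1}^M\theta^a=-m$. Dual LP (D): maximize $m'V$ over $V\in\mathbb{R}^{N-1}$ subject to $V\le\gamma P^1_{T_a}V+G^a$ (entrywise) for all $a=1,\dots,M$. *)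

From HB Require Import structures.
From mathcomp Require Import all_boot all_order all_algebra.
Set Implicit Arguments. Unset Strict Implicit. Unset Printing Implicit Defensive.
Import Order.TTheory GRing.Theory Num.Theory.
Local Open Scope ring_scope.

(* Cells D_1..D_N are indexed by 'I_N with N = n.+1; the last cell
   (ord_max) is D_N, containing the attractor.  The first N-1 cells are
   indexed by 'I_n, embedded via widen_ord. *)

Section Setting.
Variables (R : realFieldType) (S : Type) (n M L : nat).

Definition markov_mx (D : 'I_n.+1 -> S -> Prop) (T : 'I_M -> 'I_L -> S -> S)
  (mu : (S -> Prop) -> R) (a : 'I_M) (l : 'I_L) : 'M[R]_n.+1 :=
  \matrix_(i, j) (mu (fun x => D j (T a l x) /\ D i x) / mu (D i)).

Definition markov_avg D T mu (v : 'I_L -> R) (a : 'I_M) : 'M[R]_n.+1 :=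
  \sum_(l < L) v l *: markov_mx D T mu a l.

Definition sub1 (A : 'M[R]_n.+1) : 'M[R]_n :=
  \matrix_(i, j) A (widen_ord (leqnSn n) i) (widen_ord (leqnSn n) j).

Definition cost_avg (v : 'I_L -> R) (Gal : 'I_M -> 'I_L -> 'cV[R]_n) (a : 'I_M)
  : 'cV[R]_n := \sum_(l < L) v l *: Gal a l.

(* Primal LP (P) with data P1 a = P^1_{T_a}, G a = G^a, m, gamma. *)
Definition primal_feasible (P1 : 'I_M -> 'M[R]_n) (m : 'cV[R]_n) (gamma : R)
  (theta : 'I_M -> 'cV[R]_n) : Prop :=
  (forall a i, 0 <= theta a i 0) /\
  gamma *: (\sum_(a < M) (P1 a)^T *m theta a) - \sum_(a < M) theta a = - m.

Definition primal_obj (G : 'I_M -> 'cV[R]_n) (theta : 'I_M -> 'cV[R]_n) : R :=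
  \sum_(a < M) ((G a)^T *m theta a) 0 0.

Definition primal_solution P1 G m gamma theta : Prop :=
  primal_feasible P1 m gamma theta /\
  forall theta', primal_feasible P1 m gamma theta' ->
    primal_obj G theta <= primal_obj G theta'.

Definition dual_feasible (P1 : 'I_M -> 'M[R]_n) (G : 'I_M -> 'cV[R]_n)
  (gamma : R) (V : 'cV[R]_n) : Prop :=
  forall a i, V i 0 <= (gamma *: (P1 a *m V) + G a) i 0.

Definition dual_obj (m : 'cV[R]_n) (V : 'cV[R]_n) : R := (m^T *m V) 0 0.

Definition dual_solution P1 G m gamma V : Prop :=
  dual_feasible P1 G gamma V /\
  forall V', dual_feasible P1 G gamma V' -> dual_obj m V' <= dual_obj m V.

End Setting.

From HB Require Import structures.
From mathcomp Require Import all_boot all_order all_algebra.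
Import Order.TTheory GRing.Theory Num.Theory.
Set Implicit Arguments. Unset Strict Implicit. Unset Printing Implicit Defensive.
Local Open Scope ring_scope.

(* A policy pi, choosing an action in every state, gives the Z-matrix
   A_pi = I - gamma Q_pi, where row j of Q_pi is row j of P^1_{T_{pi j}}.
   Feasibility of (P) at some gamma' >= gamma produces a policy for which
   A_pi is inverse-nonnegative.  Among these finitely many policies take one
   minimising m' V_pi, with V_pi = A_pi^-1 G_pi: its value is dual feasible,
   since a violated dual constraint would allow a strictly improving switch of
   the action in a single state.  The state weights A_pi^-T m > 0, placed on
   the pairs (j, pi j), form a primal feasible point with the same objective,
   so by weak duality both are optimal, and they satisfy (1) and (2). *)

Section NonnegMatrices.
Variable R : realFieldType.

Lemma mxBE p q (A B : 'M[R]_(p, q)) i j : (A - B) i j = A i j - B i j.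
Proof. by rewrite !mxE. Qed.

Definition nnegmx p q (A : 'M[R]_(p, q)) := forall i j, 0 <= A i j.
Definition posmx p q (A : 'M[R]_(p, q)) := forall i j, 0 < A i j.

Lemma posmxW p q (A : 'M[R]_(p, q)) : posmx A -> nnegmx A.
Proof. by move=> hA i j; exact: ltW. Qed.

Lemma nnegmx_mul p q r (A : 'M[R]_(p, q)) (B : 'M[R]_(q, r)) :
  nnegmx A -> nnegmx B -> nnegmx (A *m B).
Proof. by move=> hA hB i j; rewrite mxE sumr_ge0 // => k _; rewrite mulr_ge0. Qed.

Definition vdot n (u w : 'cV[R]_n) : R := (u^T *m w) 0 0.

Lemma vdotE n (u w : 'cV[R]_n) : vdot u w = \sum_j u j 0 * w j 0.
Proof. by rewrite /vdot mxE; apply: eq_bigr => j _; rewrite mxE. Qed.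

Lemma vdotC n (u w : 'cV[R]_n) : vdot u w = vdot w u.
Proof. by rewrite !vdotE; apply: eq_bigr => j _; rewrite mulrC. Qed.

Lemma vdot_mull n (A : 'M[R]_n) (u w : 'cV[R]_n) :
  vdot (A *m u) w = vdot u (A^T *m w).
Proof. by rewrite /vdot trmx_mul mulmxA. Qed.

Lemma vdot_suml n I (r : seq I) (F : I -> 'cV[R]_n) w :
  vdot (\sum_(k <- r) F k) w = \sum_(k <- r) vdot (F k) w.
Proof. by rewrite /vdot linear_sum mulmx_suml summxE. Qed.

Lemma ler_vdot n (u u' w : 'cV[R]_n) :
  nnegmx w -> (forall j, u j 0 <= u' j 0) -> vdot u w <= vdot u' w.
Proof. by move=> w0 le_u; rewrite !vdotE ler_sum // => j _; rewrite ler_wpM2r. Qed.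

Lemma vdot_gt0 n (u w : 'cV[R]_n) :
  posmx u -> nnegmx w -> w != 0 -> 0 < vdot u w.
Proof.
move=> u0 w0 /eqP nz_w.
have uw_ge0 k : true -> 0 <= u k 0 * w k 0 by rewrite mulr_ge0 ?(posmxW u0).
rewrite vdotE lt_def sumr_ge0 ?andbT //.
apply: contra_notN nz_w => /eqP sum0; apply/matrixP => j l.
have := psumr_eq0P uw_ge0 sum0 (i:=j) isT; rewrite (ord1 l) mxE.
by move/eqP; rewrite mulf_eq0 gt_eqF //= => /eqP.
Qed.

Lemma sum_natr_eq_mul (I : finType) (b : I) (F : I -> R) :
  \sum_i (b == i)%:R * F i = F b.
Proof.
rewrite (bigD1 b) //= eqxx mul1r big1 ?addr0 // => i.
by rewrite eq_sym => /negbTE ->; rewrite mul0r.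
Qed.

Definition Zmatrix n (A : 'M[R]_n) := forall i j, i != j -> A i j <= 0.

Lemma Zmatrix_tr n (A : 'M[R]_n) : Zmatrix A -> Zmatrix A^T.
Proof. by move=> hA i j ij; rewrite mxE hA // eq_sym. Qed.

Lemma Zmatrix_1subZ n (c : R) (P : 'M[R]_n) :
  0 <= c -> nnegmx P -> Zmatrix (1%:M - c *: P).
Proof.
by move=> c0 hP i j /negbTE ij; rewrite !mxE ij mulr0n sub0r oppr_le0 mulr_ge0.
Qed.

Lemma Zmatrix_diag_mul n (d : 'rV[R]_n) (A : 'M[R]_n) :
  nnegmx d -> Zmatrix A -> Zmatrix (diag_mx d *m A).
Proof. by move=> hd hA i j ij; rewrite mul_diag_mx mxE mulr_ge0_le0 ?hA. Qed.

Lemma Zmatrix_sum n I (r : seq I) (F : I -> 'M[R]_n) :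
  (forall k, Zmatrix (F k)) -> Zmatrix (\sum_(k <- r) F k).
Proof. by move=> hF i j ij; rewrite summxE sumr_le0 // => k _; exact: hF. Qed.

Section Zmatrix.
Variables (n : nat) (A : 'M[R]_n) (x : 'cV[R]_n).
Hypotheses (ZA : Zmatrix A) (x_ge0 : nnegmx x) (Ax_gt0 : posmx (A *m x)).

Lemma Zmatrix_mul_le (y : 'cV[R]_n) i :
  nnegmx y -> (A *m y) i 0 <= A i i * y i 0.
Proof.
move=> hy; rewrite mxE (bigD1 i) //= gerDl sumr_le0 // => k ki.
by rewrite mulr_le0_ge0 ?ZA // eq_sym.
Qed.

Lemma Zmatrix_posmx : posmx x.
Proof.
move=> i j; rewrite (ord1 j) lt0r x_ge0 andbT; apply/eqP => xi0.
have := lt_le_trans (Ax_gt0 i 0) (Zmatrix_mul_le i x_ge0).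
by rewrite xi0 mulr0 ltxx.
Qed.

(* If [y] had a negative entry, add the least multiple of [x] making it
   nonnegative: the sum vanishes at some [k], where [A] then maps it to a
   nonpositive entry, although [A *m y >= 0] and [A *m x > 0]. *)
Lemma Zmatrix_nnegmx_cV (y : 'cV[R]_n) : nnegmx (A *m y) -> nnegmx y.
Proof.
move=> Ay_ge0 i0 j0; rewrite (ord1 j0) leNgt; apply/negP => y_neg.
have x_gt0 := Zmatrix_posmx.
pose f j := - y j 0 / x j 0.
have [k _ kmax] :=
  @real_arg_maxP R _ i0 xpredT f isT (fun j _ => num_real (f j)).
have {}kmax j : f j <= f k := kmax j isT.
have t_gt0 : 0 < f k.
  by apply: lt_le_trans (kmax i0); rewrite divr_gt0 ?oppr_gt0.
pose z := y + f k *: x.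
have zE j : z j 0 = y j 0 + f k * x j 0 by rewrite !mxE.
have z_ge0 : nnegmx z.
  by move=> j l; rewrite (ord1 l) zE -lerBlDl sub0r -ler_pdivrMr ?x_gt0 ?kmax.
have zk : z k 0 = 0.
  by rewrite zE /f mulrAC -mulrA divff ?mulr1 ?subrr // gt_eqF.
have : 0 < (A *m z) k 0.
  have -> : (A *m z) k 0 = (A *m y) k 0 + f k * (A *m x) k 0.
    by rewrite mulmxDr -scalemxAr !mxE.
  exact: ltr_wpDl (Ay_ge0 k 0) (mulr_gt0 t_gt0 (Ax_gt0 k 0)).
by rewrite ltNge (le_trans (Zmatrix_mul_le k z_ge0)) // zk mulr0.
Qed.

Lemma Zmatrix_nnegmx p (Y : 'M[R]_(n, p)) : nnegmx (A *m Y) -> nnegmx Y.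
Proof.
move=> AY_ge0 i j; have := @Zmatrix_nnegmx_cV (col j Y) _ i 0.
by rewrite mxE; apply=> k l; rewrite colE mulmxA -colE mxE.
Qed.

Lemma Zmatrix_unitmx : A \in unitmx.
Proof.
rewrite -unitmx_tr -row_free_unit; apply: inj_row_free => w wA0.
have Aw0 : A *m w^T = 0 by rewrite -[A]trmxK -trmx_mul wA0 trmx0.
have w_ge0 : nnegmx w^T by apply: Zmatrix_nnegmx; rewrite Aw0 => i j; rewrite mxE.
have w_le0 : nnegmx (- w^T).
  by apply: Zmatrix_nnegmx; rewrite mulmxN Aw0 oppr0 => i j; rewrite mxE.
apply/matrixP => i j; apply/eqP; rewrite mxE eq_le.
by have := w_ge0 j i; have := w_le0 j i; rewrite !mxE oppr_ge0 => -> ->.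
Qed.

Lemma Zmatrix_invmx_ge0 : nnegmx (invmx A).
Proof.
apply: Zmatrix_nnegmx; rewrite mulmxV ?Zmatrix_unitmx // => i j.
by rewrite mxE ler0n.
Qed.

End Zmatrix.
End NonnegMatrices.

Section Policies.
Variables (R : realFieldType) (n M : nat) (P1 : 'I_M -> 'M[R]_n)
  (G : 'I_M -> 'cV[R]_n) (m : 'cV[R]_n) (gamma : R).
Hypotheses (P1_ge0 : forall a, nnegmx (P1 a)) (gamma_ge0 : 0 <= gamma).

Definition bellman_mx a : 'M[R]_n := 1%:M - gamma *: P1 a.

Lemma bellman_mulmxE a (V : 'cV[R]_n) j :
  (bellman_mx a *m V) j 0 = V j 0 - gamma * (P1 a *m V) j 0.
Proof. by rewrite mulmxBl mul1mx -scalemxAl !mxE. Qed.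

Lemma dual_feasibleE V :
  dual_feasible P1 G gamma V <-> forall a j, (bellman_mx a *m V) j 0 <= G a j 0.
Proof.
have E a j :
  (gamma *: (P1 a *m V) + G a) j 0 = gamma * (P1 a *m V) j 0 + G a j 0.
  by rewrite !mxE.
by split=> hV a j; have := hV a j; rewrite E bellman_mulmxE lerBlDl.
Qed.

Lemma bellman_balance (th : 'I_M -> 'cV[R]_n) :
  \sum_a (bellman_mx a)^T *m th a =
  \sum_a th a - gamma *: \sum_a (P1 a)^T *m th a.
Proof.
rewrite scaler_sumr -sumrB; apply: eq_bigr => a _.
by rewrite linearB /= linearZ /= tr_scalar_mx mulmxBl mul1mx scalemxAl.
Qed.

Lemma primal_feasibleE th :
  primal_feasible P1 m gamma th <->
  (forall a, nnegmx (th a)) /\ \sum_a (bellman_mx a)^T *m th a = m.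
Proof.
rewrite bellman_balance; split=> -[th0 E]; split.
- by move=> a i j; rewrite (ord1 j).
- by rewrite -[m]opprK -E opprB.
- by move=> a i; exact: th0.
- by rewrite -E opprB.
Qed.

Lemma vdot_primal th V :
  primal_feasible P1 m gamma th ->
  vdot m V = \sum_a vdot (th a) (bellman_mx a *m V).
Proof.
case/primal_feasibleE=> _ <-; rewrite vdot_suml.
by apply: eq_bigr => a _; rewrite vdot_mull trmxK.
Qed.

Lemma weak_duality th V :
  primal_feasible P1 m gamma th -> dual_feasible P1 G gamma V ->
  dual_obj m V <= primal_obj G th.
Proof.
move=> th_feas /dual_feasibleE V_feas.
rewrite [dual_obj _ _](vdot_primal V th_feas).
apply: ler_sum => a _; rewrite vdotC; apply: ler_vdot => //.
by case/primal_feasibleE: th_feas.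
Qed.

Definition mix_mx (w : 'I_M -> 'rV[R]_n) : 'M[R]_n :=
  \sum_a diag_mx (w a) *m bellman_mx a.

Lemma mix_mulmxE w (y : 'cV[R]_n) j :
  (mix_mx w *m y) j 0 = \sum_a w a 0 j * (bellman_mx a *m y) j 0.
Proof.
rewrite mulmx_suml summxE; apply: eq_bigr => a _.
by rewrite -mulmxA mul_diag_mx mxE.
Qed.

Lemma tr_mix_mulmx w (u : 'cV[R]_n) :
  (mix_mx w)^T *m u = \sum_a (bellman_mx a)^T *m (diag_mx (w a) *m u).
Proof.
rewrite raddf_sum mulmx_suml; apply: eq_bigr => a _.
by rewrite /= trmx_mul tr_diag_mx mulmxA.
Qed.

Lemma Zmatrix_mix w : (forall a, nnegmx (w a)) -> Zmatrix (mix_mx w).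
Proof.
move=> w0; apply: Zmatrix_sum => a.
by apply: Zmatrix_diag_mul; [exact: w0 | exact: Zmatrix_1subZ].
Qed.

Local Notation policy := {ffun 'I_n -> 'I_M}.

Definition policy_ind (pi : policy) a : 'rV[R]_n := \row_j (pi j == a)%:R.
Definition policy_mx pi := mix_mx (policy_ind pi).
Definition policy_cost pi : 'cV[R]_n :=
  \sum_a diag_mx (policy_ind pi a) *m G a.

Lemma policy_mulmxE pi (y : 'cV[R]_n) j :
  (policy_mx pi *m y) j 0 = (bellman_mx (pi j) *m y) j 0.
Proof.
by rewrite mix_mulmxE; under eq_bigr do rewrite mxE; exact: sum_natr_eq_mul.
Qed.

Lemma policy_costE pi j : policy_cost pi j 0 = G (pi j) j 0.
Proof.
rewrite summxE; under eq_bigr do rewrite mul_diag_mx !mxE.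
exact: sum_natr_eq_mul.
Qed.

Lemma Zmatrix_policy pi : Zmatrix (policy_mx pi).
Proof. by apply: Zmatrix_mix => a i j; rewrite mxE ler0n. Qed.

Definition admissible pi := (policy_mx pi \in unitmx) &&
  [forall i, forall j, 0 <= invmx (policy_mx pi) i j].

Lemma admissibleP pi :
  reflect (policy_mx pi \in unitmx /\ nnegmx (invmx (policy_mx pi)))
          (admissible pi).
Proof.
apply: (iffP andP) => -[unit_pi inv_ge0]; split=> //.
- by move=> i j; exact: (forallP (forallP inv_ge0 i) j).
- by apply/forallP => i; apply/forallP => j; exact: inv_ge0.
Qed.

Lemma admissible_of pi (x : 'cV[R]_n) :
  nnegmx x -> posmx (policy_mx pi *m x) -> admissible pi.
Proof.
move=> x0 Ax0; apply/admissibleP; split.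
- exact: Zmatrix_unitmx (Zmatrix_policy pi) x0 Ax0.
- exact: Zmatrix_invmx_ge0 (Zmatrix_policy pi) x0 Ax0.
Qed.

Lemma admissible_nnegmx pi (y : 'cV[R]_n) :
  admissible pi -> nnegmx (policy_mx pi *m y) -> nnegmx y.
Proof.
case/admissibleP=> unit_pi inv_ge0 Ay0.
by rewrite -(mulKmx unit_pi y); exact: nnegmx_mul.
Qed.

Definition policy_value pi := invmx (policy_mx pi) *m policy_cost pi.
Definition policy_obj pi := vdot m (policy_value pi).

Lemma policy_valueK pi :
  admissible pi -> policy_mx pi *m policy_value pi = policy_cost pi.
Proof. by case/admissibleP=> unit_pi _; rewrite mulKVmx. Qed.

Lemma policy_value_bellman pi j : admissible pi ->
  policy_value pi j 0 =
  gamma * (P1 (pi j) *m policy_value pi) j 0 + G (pi j) j 0.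
Proof.
move=> adm; have := congr1 (fun X : 'cV[R]_n => X j 0) (policy_valueK adm).
by rewrite policy_mulmxE bellman_mulmxE policy_costE => <-; rewrite addrC subrK.
Qed.

Hypotheses (G_gt0 : forall a, posmx (G a)) (m_gt0 : posmx m).

Lemma policy_cost_gt0 pi : posmx (policy_cost pi).
Proof. by move=> i j; rewrite (ord1 j) policy_costE; exact: G_gt0. Qed.

Lemma policy_value_ge0 pi : admissible pi -> nnegmx (policy_value pi).
Proof.
by case/admissibleP=> _ inv_ge0; apply: nnegmx_mul (posmxW (policy_cost_gt0 pi)).
Qed.

Lemma policy_improvement pi b k :
  admissible pi -> G b k 0 < (bellman_mx b *m policy_value pi) k 0 ->
  exists2 pi', admissible pi' & policy_obj pi' < policy_obj pi.
Proof.
move=> adm lt_k; set V := policy_value pi.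
pose pi' : policy := [ffun j => if j == k then b else pi j].
have le_cost j : policy_cost pi' j 0 <= (policy_mx pi' *m V) j 0.
  rewrite policy_costE policy_mulmxE ffunE.
  case: eqP => [->|_]; first exact: ltW.
  by rewrite -policy_mulmxE policy_valueK // policy_costE.
have adm' : admissible pi'.
  apply: (admissible_of (policy_value_ge0 adm)) => j l; rewrite (ord1 l).
  exact: lt_le_trans (policy_cost_gt0 _ _ _) (le_cost j).
exists pi' => //; pose W := V - policy_value pi'.
have AW : policy_mx pi' *m W = policy_mx pi' *m V - policy_cost pi'.
  by rewrite mulmxBr policy_valueK.
have W_ge0 : nnegmx W.
  by apply: (admissible_nnegmx adm') => j l; rewrite (ord1 l) AW mxBE subr_ge0.
have W_neq0 : W != 0.
  apply: contraTneq lt_k => W0; rewrite -leNgt.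
  have := congr1 (fun X : 'cV[R]_n => X k 0) AW.
  rewrite W0 mulmx0 mxBE mxE policy_costE policy_mulmxE ffunE eqxx mxE => /eqP.
  by rewrite eq_sym subr_eq0 => /eqP ->.
by have := vdot_gt0 m_gt0 W_ge0 W_neq0; rewrite /vdot mulmxBr mxBE subr_gt0.
Qed.

Lemma argmin_policy_dual_feasible pi : admissible pi ->
  (forall p, admissible p -> policy_obj pi <= policy_obj p) ->
  dual_feasible P1 G gamma (policy_value pi).
Proof.
move=> adm pi_min; apply/dual_feasibleE => b k; rewrite leNgt.
by apply/negP => /(policy_improvement adm) [p /pi_min]; rewrite leNgt => /negP.
Qed.

Definition policy_visits pi := (invmx (policy_mx pi))^T *m m.
Definition policy_occ pi a := diag_mx (policy_ind pi a) *m policy_visits pi.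

Lemma policy_visitsK pi :
  admissible pi -> (policy_mx pi)^T *m policy_visits pi = m.
Proof.
by case/admissibleP=> unit_pi _; rewrite /policy_visits trmx_inv mulKVmx ?unitmx_tr.
Qed.

Lemma policy_visits_gt0 pi : admissible pi -> posmx (policy_visits pi).
Proof.
move=> adm; have [_ inv_ge0] := admissibleP _ adm.
have visits_ge0 : nnegmx (policy_visits pi).
  by apply: nnegmx_mul (posmxW m_gt0) => i j; rewrite mxE.
apply: (Zmatrix_posmx (Zmatrix_tr (Zmatrix_policy pi)) visits_ge0).
by rewrite policy_visitsK.
Qed.

Lemma policy_occE pi a j :
  policy_occ pi a j 0 = (pi j == a)%:R * policy_visits pi j 0.
Proof. by rewrite /policy_occ mul_diag_mx !mxE. Qed.

Lemma policy_occ_feasible pi :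
  admissible pi -> primal_feasible P1 m gamma (policy_occ pi).
Proof.
move=> adm; apply/primal_feasibleE; split=> [a i j|].
  by rewrite (ord1 j) policy_occE mulr_ge0 ?ler0n // ltW ?policy_visits_gt0.
by rewrite -tr_mix_mulmx policy_visitsK.
Qed.

Lemma policy_occ_obj pi :
  admissible pi -> primal_obj G (policy_occ pi) = policy_obj pi.
Proof.
move=> adm; rewrite /primal_obj.
under eq_bigr do rewrite -/(vdot _ _) /policy_occ -tr_diag_mx -vdot_mull.
rewrite -vdot_suml -/(policy_cost pi) -policy_valueK // vdot_mull.
by rewrite policy_visitsK // vdotC.
Qed.

(* Weighting the Bellman rows by a feasible [th] gives a Z-matrix [B] with
   [B^T 1 >= m > 0]; hence [B^-1 >= 0], and [y := B^-1 1] satisfies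
   [sum_a th_a j ((I - gamma P1 a) y)_j = 1], so every state [j] has an
   action [a] with [((I - gamma P1 a) y)_j > 0]. *)
Lemma exists_admissible g th :
  gamma <= g -> primal_feasible P1 m g th -> exists pi, admissible pi.
Proof.
move=> le_g [th_ge0 th_bal].
pose w a := (th a)^T; pose B := mix_mx w; pose one : 'cV[R]_n := const_mx 1.
have w_ge0 a : nnegmx (w a) by move=> i j; rewrite mxE (ord1 i); exact: th_ge0.
have one_ge0 : nnegmx one by move=> i j; rewrite mxE ler01.
have BT1_gt0 : posmx (B^T *m one).
  have diag_w1 a : diag_mx (w a) *m one = th a.
    by apply/matrixP => i j; rewrite (ord1 j) mul_diag_mx !mxE mulr1.
  have sum_th : \sum_a th a = m + g *: \sum_a (P1 a)^T *m th a.
    by rewrite -[m]opprK -th_bal opprB subrK.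
  rewrite tr_mix_mulmx; under eq_bigr do rewrite diag_w1.
  rewrite bellman_balance sum_th -addrA -scalerBl => i j; rewrite (ord1 j) !mxE.
  rewrite ltr_pwDl ?m_gt0 // mulr_ge0 ?subr_ge0 // summxE sumr_ge0 // => a _.
  apply: nnegmx_mul => [i' j'|i' l]; first by rewrite mxE P1_ge0.
  by rewrite (ord1 l).
have ZBT := Zmatrix_tr (Zmatrix_mix w_ge0).
have unitB : B \in unitmx by rewrite -unitmx_tr (Zmatrix_unitmx ZBT one_ge0).
have invB_ge0 : nnegmx (invmx B).
  by move=> i j; rewrite -[B]trmxK -trmx_inv mxE (Zmatrix_invmx_ge0 ZBT one_ge0).
pose y := invmx B *m one.
have act_ex j : exists a, 0 < (bellman_mx a *m y) j 0.
  apply/existsP.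
  have : 0 < (B *m y) j 0 by rewrite mulKVmx // mxE ltr01.
  rewrite mix_mulmxE; apply: contraLR => /existsPn y_le0.
  rewrite -leNgt sumr_le0 // => a _.
  by rewrite mulr_ge0_le0 ?w_ge0 // leNgt y_le0.
have [act act_gt0] := fin_all_exists act_ex.
exists [ffun j => act j]; apply: (admissible_of (x := y)).
  exact: nnegmx_mul invB_ge0 one_ge0.
by move=> j l; rewrite (ord1 l) policy_mulmxE ffunE.
Qed.

End Policies.

Lemma nnegmx_sub1 (R : realFieldType) n (A : 'M[R]_n.+1) :
  nnegmx A -> nnegmx (sub1 A).
Proof. by move=> A0 i j; rewrite mxE. Qed.

Lemma markov_avg_ge0 (R : realFieldType) S n M L (D : 'I_n.+1 -> S -> Prop)
    (T : 'I_M -> 'I_L -> S -> S) (mu : (S -> Prop) -> R) (v : 'I_L -> R) a :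
  (forall A, 0 <= mu A) -> (forall l, 0 <= v l) ->
  nnegmx (markov_avg D T mu v a).
Proof.
move=> mu0 v0 i j; rewrite summxE sumr_ge0 // => l _.
by rewrite !mxE mulr_ge0 ?divr_ge0.
Qed.

Theorem lemma2 (R : realFieldType) (S : Type) (n M L : nat)
  (X : S -> Prop) (D : 'I_n.+1 -> S -> Prop) (Attr : S -> Prop)
  (T : 'I_M -> 'I_L -> S -> S) (mu : (S -> Prop) -> R)
  (v : 'I_L -> R) (Gal : 'I_M -> 'I_L -> 'cV[R]_n) (m : 'cV[R]_n)
  (* partition of the state space X, attractor in D_N *)
  (hDX : forall i x, D i x -> X x)
  (hcover : forall x, X x -> exists i, D i x)
  (hdisj : forall i j x, D i x -> D j x -> i = j)
  (hAttr : forall x, Attr x -> D ord_max x)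
  (hT : forall a l x, X x -> X (T a l x))
  (* measure: nonnegative, cells of positive measure *)
  (hmu : forall A, 0 <= mu A)
  (hmuD : forall i, 0 < mu (D i))
  (* probabilities of the uncertainty values *)
  (hv : forall l, 0 <= v l) (hv1 : \sum_(l < L) v l = 1)
  (* positivity assumptions *)
  (hm : forall j, 0 < m j 0)
  (hG : forall a j, 0 < cost_avg v Gal a j 0) :
  let P1 := fun a => sub1 (markov_avg D T mu v a) in
  let G := cost_avg v Gal in
  (exists gamma0, 1 < gamma0 /\ exists theta, primal_feasible P1 m gamma0 theta) ->
  forall gamma : R, 1 <= gamma ->
  (* gamma < sup { gamma' > 1 | (P) feasible at gamma' } *)
  (exists gamma', gamma < gamma' /\ 1 < gamma' /\
                  exists theta, primal_feasible P1 m gamma' theta) ->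
  exists (theta : 'I_M -> 'cV[R]_n) (V : 'cV[R]_n),
    primal_solution P1 G m gamma theta /\ dual_solution P1 G m gamma V /\
    (forall j : 'I_n, exists a : 'I_M,
        V j 0 = gamma * (P1 a *m V) j 0 + G a j 0 /\ 0 < theta a j 0) /\
    (exists theta' : 'I_M -> 'cV[R]_n,
        primal_solution P1 G m gamma theta' /\
        forall j : 'I_n, exists a : 'I_M,
          0 < theta' a j 0 /\ forall a' : 'I_M, a' <> a -> theta' a' j 0 = 0).
Proof.
move=> P1 G _ gamma ge1_gamma [g [lt_g [_ [th_g feas_g]]]].
have P1_ge0 a : nnegmx (P1 a) by apply/nnegmx_sub1/markov_avg_ge0.
have gamma_ge0 : 0 <= gamma by apply: le_trans ler01 ge1_gamma.
have G_gt0 a : posmx (G a) by move=> i j; rewrite (ord1 j).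
have m_gt0 : posmx m by move=> i j; rewrite (ord1 j).
have [pi0 adm0] := exists_admissible P1_ge0 gamma_ge0 m_gt0 (ltW lt_g) feas_g.
have [pi adm pi_min] :=
  real_arg_minP (F := policy_obj P1 G m gamma) adm0 (fun p _ => num_real _).
have V_feas :=
  argmin_policy_dual_feasible P1_ge0 gamma_ge0 G_gt0 m_gt0 adm pi_min.
have th_feas := policy_occ_feasible P1_ge0 gamma_ge0 m_gt0 adm.
have th_obj := policy_occ_obj G m adm.
exists (policy_occ P1 m gamma pi), (policy_value P1 G gamma pi).
have th_opt : primal_solution P1 G m gamma (policy_occ P1 m gamma pi).
  by split=> // th' /weak_duality /(_ V_feas); rewrite th_obj.
have th_pos j : 0 < policy_occ P1 m gamma pi (pi j) j 0.
  by rewrite policy_occE eqxx mul1r policy_visits_gt0.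
split=> //; split; [|split].
- by split=> // V' /(weak_duality th_feas); rewrite th_obj.
- by move=> j; exists (pi j); split; [exact: policy_value_bellman | exact: th_pos].
- exists (policy_occ P1 m gamma pi); split=> // j; exists (pi j); split=> // a.
  by move/eqP; rewrite policy_occE eq_sym => /negbTE ->; rewrite mul0r.
Qed.
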